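(* There exist a sequence of Pauli Hamiltonians $H_n=\sum_ic_i^{(n)}P_i^{(n)}$ and states $|\psi_n\rangle$ such that $$\frac{D_n(\psi_n)}{\mathrm{Var}(H_n)|_{\psi_n}}\longrightarrow0\quad(n\to\infty),$$ where $D_n(\psi)=\sum_i(c_i^{(n)})^2\,(1-\langle\psi|P_i^{(n)}|\psi\rangle^2)$ and $\mathrm{Var}(H_n)|_\psi=\langle\psi|H_n^2|\psi\rangle-\langle\psi|H_n|\psi\rangle^2$.
   Context: A Pauli Hamiltonian is $H=\sum_ic_iP_i$ with real coefficients and distinct $n$-qubit Pauli strings $P_i\in\{I,X,Y,Z\}^{\otimes n}$. *)

From HB Require Import structures.
From mathcomp Require Import all_boot all_order all_algebra.
From mathcomp Require Import complex.
From mathcomp Require Import all_classical all_reals topology normedtype sequences.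
Set Implicit Arguments. Unset Strict Implicit. Unset Printing Implicit Defensive.
Import Order.TTheory GRing.Theory Num.Theory.
Local Open Scope ring_scope.
Local Open Scope complex_scope.

Section Pauli.
Variable R : realType.
Local Notation C := R[i].

(* Single-qubit Pauli matrices, encoded by 'I_4 : 0 = I, 1 = X, 2 = Y, 3 = Z. *)
Definition sigma (p : 'I_4) : 'M[C]_2 :=
  \matrix_(a < 2, b < 2)
    match nat_of_ord p, nat_of_ord a, nat_of_ord b with
    | 0, 0, 0 => 1 | 0, 1, 1 => 1
    | 1, 0, 1 => 1 | 1, 1, 0 => 1
    | 2, 0, 1 => - 'i | 2, 1, 0 => 'i
    | 3, 0, 0 => 1 | 3, 1, 1 => -1
    | _, _, _ => 0
    end.

Definition pauli_string (n : nat) := {ffun 'I_n -> 'I_4}.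

Definition qbit (n : nat) (i : 'I_(2 ^ n)) (j : 'I_n) : 'I_2 :=
  inord ((nat_of_ord i %/ 2 ^ j) %% 2).

(* Matrix of the Pauli string P = P_0 (x) ... (x) P_{n-1} in the computational
   basis (qubit j is bit j of the basis index): entrywise tensor product. *)
Definition pauli_mx (n : nat) (P : pauli_string n) : 'M[C]_(2 ^ n) :=
  \matrix_(a, b) \prod_(j < n) sigma (P j) (qbit a j) (qbit b j).

(* A Pauli Hamiltonian H = sum_P c_P P with real coefficients, indexed by
   (distinct) Pauli strings; strings absent from H have coefficient 0. *)
Definition hamiltonian_mx (n : nat) (c : {ffun pauli_string n -> R}) : 'M[C]_(2 ^ n) :=
  \sum_(P : pauli_string n) (c P)%:C *: pauli_mx P.

Definition expect (n : nat) (psi : 'cV[C]_(2 ^ n)) (A : 'M[C]_(2 ^ n)) : C :=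
  ((map_mx (@conjc R) psi)^T *m A *m psi) 0 0.

Definition is_state (n : nat) (psi : 'cV[C]_(2 ^ n)) : Prop :=
  expect psi 1%:M = 1.

(* D_n(psi) = sum_i c_i^2 (1 - <psi|P_i|psi>^2)  (expectations of Hermitian
   operators are real; we take their real part). *)
Definition Dn (n : nat) (c : {ffun pauli_string n -> R}) (psi : 'cV[C]_(2 ^ n)) : R :=
  \sum_(P : pauli_string n) (c P) ^+ 2 * (1 - (@complex.Re R (expect psi (pauli_mx P))) ^+ 2).

Definition variance (n : nat) (c : {ffun pauli_string n -> R}) (psi : 'cV[C]_(2 ^ n)) : R :=
  @complex.Re R (expect psi (hamiltonian_mx c *m hamiltonian_mx c))
  - (@complex.Re R (expect psi (hamiltonian_mx c))) ^+ 2.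

End Pauli.

(* Take H_n = Z_1 + ... + Z_n and the cat-like state psi_n = a|0...0> + b|1...1> with
   a^2 + b^2 = 1 and a, b <> 0.  Every Z_j has expectation a^2 - b^2, so each term of
   D_n equals 1 - (a^2 - b^2)^2 = 4 a^2 b^2 and D_n grows only linearly in n.  On the
   other hand psi_n superposes two eigenvectors of H_n with the extreme eigenvalues n
   and -n, so Var(H_n) = 4 a^2 b^2 n^2 and D_n / Var(H_n) = 1/n. *)

From HB Require Import structures.
From mathcomp Require Import all_boot all_order all_algebra.
From mathcomp Require Import complex.
From mathcomp Require Import all_classical all_reals topology normedtype sequences.
From mathcomp Require Import ring zify.
Import Order.TTheory GRing.Theory Num.Theory numFieldNormedType.Exports.

Set Implicit Arguments.
Unset Strict Implicit.

Lemma eq_from_bits n x y : x < 2 ^ n -> y < 2 ^ n ->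
  (forall j, j < n -> (x %/ 2 ^ j) %% 2 = (y %/ 2 ^ j) %% 2) -> x = y.
Proof.
elim: n x y => [|n IHn] x y; first by rewrite !ltnS !leqn0 => /eqP-> /eqP->.
move=> ltx lty eq_bits.
have eq_half : x %/ 2 = y %/ 2.
  apply: IHn; rewrite ?ltn_divLR -?expnSr // => j ltjn.
  by have := eq_bits j.+1 ltjn; rewrite !expnS !divnMA.
have := eq_bits 0 (ltn0Sn n); rewrite !divn1 => eq_bit0.
by rewrite (divn_eq x 2) (divn_eq y 2) eq_half eq_bit0.
Qed.

Lemma exp2_gt0 n : 0 < 2 ^ n.
Proof. by rewrite expn_gt0. Qed.

Lemma pred_exp2_lt n : (2 ^ n).-1 < 2 ^ n.
Proof. by rewrite ltn_predL exp2_gt0. Qed.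

Lemma bit_pred_exp2 n j : j < n -> ((2 ^ n).-1 %/ 2 ^ j) %% 2 = 1.
Proof.
move=> ltjn.
have -> : (2 ^ n).-1 = (2 ^ (n - j)).-1 * 2 ^ j + (2 ^ j).-1.
  rewrite -{1}(subnKC (ltnW ltjn)) expnD mulnC.
  by move: (exp2_gt0 j) (exp2_gt0 (n - j)); set u := 2 ^ j; set v := 2 ^ (n - j); nia.
rewrite divnMDl ?exp2_gt0 // divn_small ?addn0 ?pred_exp2_lt //.
by rewrite modn2 -subn1 oddB ?exp2_gt0 // oddX subn_eq0 leqNgt ltjn.
Qed.

Lemma qbitE n (x : 'I_(2 ^ n)) (j : 'I_n) : qbit x j = (x %/ 2 ^ j) %% 2 :> nat.
Proof. by rewrite inordK // ltn_mod. Qed.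

Lemma neq_qbit n (x y : 'I_(2 ^ n)) : x != y -> exists j, qbit x j != qbit y j.
Proof.
move=> neq_xy; apply/existsP; apply: contraR neq_xy; rewrite negb_exists.
move=> /forallP same_bits; apply/eqP/val_inj/(@eq_from_bits n) => [||j ltjn].
- exact: ltn_ord.
- exact: ltn_ord.
have /negPn/eqP/(congr1 val) := same_bits (Ordinal ltjn).
by rewrite /= !qbitE.
Qed.

Definition all_zeros n : 'I_(2 ^ n) := Ordinal (exp2_gt0 n).
Definition all_ones n : 'I_(2 ^ n) := Ordinal (pred_exp2_lt n).

Lemma qbit_all_zeros n (j : 'I_n) : qbit (all_zeros n) j = 0 :> nat.
Proof. by rewrite qbitE div0n. Qed.

Lemma qbit_all_ones n (j : 'I_n) : qbit (all_ones n) j = 1 :> nat.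
Proof. by rewrite qbitE bit_pred_exp2. Qed.

Lemma all_zeros_neq_ones n : 0 < n -> all_zeros n != all_ones n.
Proof.
move=> n_gt0; apply/eqP => /(congr1 (fun x => qbit x (Ordinal n_gt0))) /(congr1 val).
by rewrite /= qbit_all_zeros qbit_all_ones.
Qed.

Section PauliZ.
Local Open Scope ring_scope.
Local Open Scope complex_scope.
Variable R : realType.
Local Notation C := R[i].

Definition pauli_I : 'I_4 := Ordinal (isT : 0 < 4)%N.
Definition pauli_Z : 'I_4 := Ordinal (isT : 3 < 4)%N.

Lemma sigma_I (a b : 'I_2) : sigma R pauli_I a b = (a == b)%:R.
Proof. by rewrite mxE; case: a b => [[|[|a]] ?] [[|[|b]] ?]. Qed.

Lemma sigma_Z (a b : 'I_2) : sigma R pauli_Z a b = (-1) ^+ a *+ (a == b).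
Proof. by rewrite mxE; case: a b => [[|[|a]] ?] [[|[|b]] ?]. Qed.

Definition pauliZ n (j : 'I_n) : pauli_string n :=
  [ffun k => if k == j then pauli_Z else pauli_I].

Lemma pauliZ_inj n : injective (@pauliZ n).
Proof.
move=> j k /(congr1 (fun P : pauli_string n => P j)); rewrite !ffunE eqxx.
by case: eqP.
Qed.

Lemma pauliZ_mx n (j : 'I_n) :
  pauli_mx R (pauliZ j) = diag_mx (\row_x (-1) ^+ qbit x j).
Proof.
apply/matrixP => x y; rewrite !mxE; have [<-|neq_xy] := eqVneq x y.
  rewrite mulr1n (bigD1 j) //= big1 => [|k neq_kj]; rewrite ffunE.
    by rewrite eqxx sigma_Z eqxx mulr1 mulr1n.
  by rewrite (negbTE neq_kj) sigma_I eqxx.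
have [k neq_bits] := neq_qbit neq_xy; rewrite mulr0n (bigD1 k) //= ffunE.
by case: eqP => _; rewrite ?sigma_Z ?sigma_I (negbTE neq_bits) ?mulr0n mul0r.
Qed.

Definition sumZ_coef n : {ffun pauli_string n -> R} :=
  [ffun P => (P \in [set pauliZ j | j : 'I_n])%:R].

Lemma sum_sumZ_coef n (V : nmodType) (F : pauli_string n -> R -> V) :
  (forall P, F P 0 = 0) -> \sum_P F P (sumZ_coef n P) = \sum_j F (pauliZ j) 1.
Proof.
move=> F0; rewrite -[RHS](big_imset (fun P => F P 1)) /=; last first.
  by move=> j k _ _; apply: pauliZ_inj.
rewrite [RHS]big_mkcond; apply: eq_bigr => P _; rewrite ffunE.
by case: (P \in _).
Qed.

Lemma hamiltonian_sumZ n :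
  hamiltonian_mx (sumZ_coef n) = diag_mx (\row_x \sum_j (-1) ^+ qbit x j).
Proof.
rewrite /hamiltonian_mx (sum_sumZ_coef (F := fun P c => c%:C *: pauli_mx R P)).
  under eq_bigr do rewrite /= scale1r pauliZ_mx.
  rewrite -raddf_sum /=; congr diag_mx; apply/rowP => x.
  by rewrite summxE !mxE; apply: eq_bigr => j _; rewrite mxE.
by move=> P; rewrite scale0r.
Qed.

Lemma sum_sign_all_zeros n :
  \sum_(j < n) (-1) ^+ qbit (all_zeros n) j = (n%:R : R)%:C.
Proof.
rewrite (eq_bigr (fun=> 1)) => [|j _]; last by rewrite qbit_all_zeros.
by rewrite sumr_const card_ord rmorph_nat.
Qed.

Lemma sum_sign_all_ones n :
  \sum_(j < n) (-1) ^+ qbit (all_ones n) j = (- n%:R : R)%:C.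
Proof.
rewrite (eq_bigr (fun=> -1)) => [|j _]; last by rewrite qbit_all_ones.
by rewrite sumr_const card_ord mulNrn rmorphN rmorph_nat.
Qed.

Lemma Dn_sumZ n (psi : 'cV[C]_(2 ^ n)) : Dn (sumZ_coef n) psi =
  \sum_j (1 - (complex.Re (expect psi (pauli_mx R (pauliZ j)))) ^+ 2).
Proof.
rewrite /Dn (sum_sumZ_coef
  (F := fun P c => c ^+ 2 * (1 - complex.Re (expect psi (pauli_mx R P)) ^+ 2))).
  by under eq_bigr do rewrite expr1n mul1r.
by move=> P; rewrite expr0n mul0r.
Qed.

Lemma expect_diag_mx n (v : 'cV[C]_(2 ^ n)) (d : 'rV[C]_(2 ^ n)) :
  expect v (diag_mx d) = \sum_x (v x 0)^* * v x 0 * d 0 x.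
Proof.
rewrite /expect mul_mx_diag mxE; apply: eq_bigr => x _.
by rewrite !mxE mulrAC.
Qed.

Lemma basis_state n (x : 'I_(2 ^ n)) : is_state (delta_mx x 0 : 'cV[C]_(2 ^ n)).
Proof.
rewrite /is_state -diag_const_mx expect_diag_mx (bigD1 x) //= big1 => [|y neq_yx].
  by rewrite !mxE eqxx /= conjC1 !mulr1 addr0.
by rewrite !mxE (negbTE neq_yx) mulr0 mul0r.
Qed.

(* [expect] conjugates with [Num.conj], which is not syntactically [conjc]. *)
Lemma conjC_real (x : R) : Num.conj x%:C = x%:C :> C.
Proof. exact: conjc_real. Qed.

End PauliZ.

Section GHZ.
Local Open Scope ring_scope.
Local Open Scope complex_scope.
Variables (R : realType) (a b : R).
Local Notation C := R[i].

Definition ghz n : 'cV[C]_(2 ^ n) :=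
  a%:C *: delta_mx (all_zeros n) 0 + b%:C *: delta_mx (all_ones n) 0.

Lemma ghzE n x :
  ghz n x 0 = a%:C *+ (x == all_zeros n) + b%:C *+ (x == all_ones n).
Proof. by rewrite !mxE !andbT !mulr_natr. Qed.

Lemma expect_ghz_diag n (d : 'rV[C]_(2 ^ n)) : (0 < n)%N ->
  expect (ghz n) (diag_mx d) =
  (a ^+ 2)%:C * d 0 (all_zeros n) + (b ^+ 2)%:C * d 0 (all_ones n).
Proof.
move=> n_gt0; have ne01 := all_zeros_neq_ones n_gt0.
rewrite expect_diag_mx (bigD1 (all_zeros n)) //= (bigD1 (all_ones n)) 1?eq_sym //=.
rewrite big1 => [|x /andP[ne_zeros ne_ones]]; last first.
  by rewrite ghzE (negbTE ne_zeros) (negbTE ne_ones) /= mulr0n addr0 mulr0 mul0r.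
rewrite !ghzE !eqxx (negbTE ne01) eq_sym (negbTE ne01) /= !mulr0n addr0 add0r.
by rewrite !mulr1n !conjC_real -!expr2 !rmorphXn addr0.
Qed.

Hypothesis ghz_normed : a ^+ 2 + b ^+ 2 = 1.

Lemma ghz_state n : (0 < n)%N -> is_state (ghz n).
Proof.
move=> n_gt0; rewrite /is_state -diag_const_mx expect_ghz_diag // !mxE !mulr1.
by rewrite -rmorphD ghz_normed.
Qed.

Lemma one_sub_sqr_ghz : 1 - (a ^+ 2 - b ^+ 2) ^+ 2 = 4 * a ^+ 2 * b ^+ 2.
Proof.
transitivity ((a ^+ 2 + b ^+ 2) ^+ 2 - (a ^+ 2 - b ^+ 2) ^+ 2); last by ring.
by rewrite ghz_normed expr1n.
Qed.

Lemma Dn_ghz n : (0 < n)%N ->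
  Dn (sumZ_coef R n) (ghz n) = n%:R * (4 * a ^+ 2 * b ^+ 2).
Proof.
move=> n_gt0; rewrite Dn_sumZ (eq_bigr (fun=> 4 * a ^+ 2 * b ^+ 2)) => [|j _].
  by rewrite sumr_const card_ord [RHS]mulr_natl.
rewrite -one_sub_sqr_ghz pauliZ_mx expect_ghz_diag // !mxE.
by rewrite qbit_all_zeros qbit_all_ones mulr1 mulrN1 -rmorphN -rmorphD.
Qed.

Lemma variance_ghz n : (0 < n)%N ->
  variance (sumZ_coef R n) (ghz n) = n%:R ^+ 2 * (4 * a ^+ 2 * b ^+ 2).
Proof.
move=> n_gt0; rewrite /variance hamiltonian_sumZ mulmx_diag !expect_ghz_diag //.
rewrite !mxE sum_sign_all_zeros sum_sign_all_ones -!rmorphM -!rmorphD /=.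
transitivity (n%:R ^+ 2 * ((a ^+ 2 + b ^+ 2) - (a ^+ 2 - b ^+ 2) ^+ 2)).
  by ring.
by rewrite ghz_normed one_sub_sqr_ghz.
Qed.

Hypotheses (a_neq0 : a != 0) (b_neq0 : b != 0).

Lemma variance_ghz_neq0 n : (0 < n)%N -> variance (sumZ_coef R n) (ghz n) != 0.
Proof.
move=> n_gt0; rewrite variance_ghz //.
by rewrite !mulf_neq0 ?expf_neq0 ?pnatr_eq0 -?lt0n.
Qed.

Lemma Dn_div_variance_ghz n : (0 < n)%N ->
  Dn (sumZ_coef R n) (ghz n) / variance (sumZ_coef R n) (ghz n) = n%:R^-1.
Proof.
move=> n_gt0; rewrite Dn_ghz // variance_ghz //.
by field; rewrite a_neq0 b_neq0 pnatr_eq0 -lt0n n_gt0.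
Qed.

End GHZ.

Local Open Scope ring_scope.
Local Open Scope classical_set_scope.

Theorem proposition1 (R : realType) :
  exists (c : forall n : nat, {ffun pauli_string n -> R})
         (psi : forall n : nat, 'cV[R[i]]_(2 ^ n)),
    (forall n, is_state (psi n)) /\
    (\forall n \near \oo, variance (c n) (psi n) != 0) /\
    (fun n => Dn (c n) (psi n) / variance (c n) (psi n)) @ \oo --> (0 : R).
Proof.
pose a : R := 3 / 5; pose b : R := 4 / 5.
have normed : a ^+ 2 + b ^+ 2 = 1 by rewrite /a /b; field.
have a_neq0 : a != 0 by rewrite /a mulf_neq0 ?invr_eq0 ?pnatr_eq0.
have b_neq0 : b != 0 by rewrite /b mulf_neq0 ?invr_eq0 ?pnatr_eq0.
(* On zero qubits the two basis vectors of [ghz] coincide. *)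
exists (sumZ_coef R), (fun n => if n == 0 then delta_mx (all_zeros n) 0 else ghz a b n).
split; first by case=> [|n]; [exact: basis_state | exact: ghz_state].
split; first by exists 1 => // n /= n_gt0; rewrite gtn_eqF // variance_ghz_neq0.
rewrite -cvg_shiftS; apply: cvg_trans cvg_harmonic; apply: near_eq_cvg.
by apply: nearW => n /=; rewrite Dn_div_variance_ghz.
Qed.
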